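(* Let $M\ge 0$, $\mathcal{M}=\{0,\dots,M\}$, $T\ge 1$, $c_u,c_l>0$, $0\le\beta\le 1$, and let $P$ be a stochastic matrix on $\mathcal{M}$ with rows $P_{i,\cdot}$. For a probability vector $b$ on $\mathcal{M}$ and $r\in\mathcal{M}$ let $$\bar C(b;r)=c_l\sum_{i=r}^{M} b(i)(i-r)+c_u\sum_{i=0}^{r-1} b(i)(r-i),$$ and when $\sum_{j\ge r}b(j)>0$ let $T_r[b]$ be the probability vector with $T_r[b](i)=0$ for $i<r$ and $T_r[b](i)=b(i)/\sum_{j=r}^M b(j)$ for $i\ge r$. Define $$V_T(b)=\min_{r}\bar C(b;r),\qquad V_t(b)=\min_{r\in\mathcal{M}}\Big\{\bar C(b;r)+\beta\Big[\Big(\sum_{i=r}^M b(i)\Big)V_{t+1}(T_r[b]P)+\sum_{i=0}^{r-1} b(i)V_{t+1}(P_{i,\cdot})\Big]\Big\},\ t<T,$$ (the first bracketed term being $0$ when $\sum_{i\ge r}b(i)=0$), and the full-observation value functions $$V^{FO}_T(b)=\bar C(b;\pi^{m}(b)),\qquad V^{FO}_t(b)=\bar C(b;\pi^{m}(b))+\beta\sum_{i=0}^M b(i)\,V^{FO}_{t+1}(P_{i,\cdot}),\ t<T,$$ where $\pi^m(b)=\min\{r\in\mathcal{M}:\sum_{i=0}^r b(i)\ge \frac{c_l}{c_l+c_u}\}$. Then for every $t\in\{1,\dots,T\}$ and every probability vector $b$, $V_t(b)\ge V^{FO}_t(b)$.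
   Context: $V_t$ is the optimal cost-to-go of the partially observed tracking problem (a Markov chain $B_t$ with transition matrix $P$; action $r>B_t$ costs $c_u(r-B_t)$ and reveals $B_t$, action $r\le B_t$ costs $c_l(B_t-r)$ and reveals only $B_t\ge r$), written in terms of the belief $b$; $V^{FO}$ is the cost-to-go of a genie that observes the state after every step. *)

From mathcomp Require Import all_boot all_order all_algebra.
Set Implicit Arguments. Unset Strict Implicit. Unset Printing Implicit Defensive.
Import Order.TTheory GRing.Theory Num.Theory.
Local Open Scope ring_scope.

Section Tracking.
Variables (R : realFieldType) (M : nat).
Notation S := 'I_M.+1.

Definition prob_vec (b : {ffun S -> R}) : Prop :=
  (forall i, 0 <= b i) /\ \sum_i b i = 1.

Definition stochastic (P : 'M[R]_M.+1) : Prop :=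
  (forall i j, 0 <= P i j) /\ (forall i, \sum_j P i j = 1).

Definition rowP (P : 'M[R]_M.+1) (i : S) : {ffun S -> R} := [ffun j => P i j].

Definition minS (f : S -> R) : R := \big[Num.min/f ord0]_(r : S) f r.

Definition Cbar (cu cl : R) (b : {ffun S -> R}) (r : S) : R :=
  cl * (\sum_(i : S | (r <= i)%N) b i * ((i : nat)%:R - (r : nat)%:R))
  + cu * (\sum_(i : S | (i < r)%N) b i * ((r : nat)%:R - (i : nat)%:R)).

Definition tail_mass (b : {ffun S -> R}) (r : S) : R :=
  \sum_(i : S | (r <= i)%N) b i.

Definition Tr (b : {ffun S -> R}) (r : S) : {ffun S -> R} :=
  [ffun i : S => if (r <= i)%N then b i / tail_mass b r else 0].

Definition propag (P : 'M[R]_M.+1) (b : {ffun S -> R}) : {ffun S -> R} :=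
  [ffun j => \sum_i b i * P i j].

(* Partially observed value with k steps to go: V_t = Vpo (T - t). *)
Fixpoint Vpo (cu cl beta : R) (P : 'M[R]_M.+1) (k : nat) (b : {ffun S -> R}) : R :=
  match k with
  | 0 => minS (Cbar cu cl b)
  | k'.+1 => minS (fun r =>
       Cbar cu cl b r
       + beta * ((if tail_mass b r > 0
                  then tail_mass b r * Vpo cu cl beta P k' (propag P (Tr b r))
                  else 0)
                 + \sum_(i : S | (i < r)%N) b i * Vpo cu cl beta P k' (rowP P i)))
  end.

Definition pim (cu cl : R) (b : {ffun S -> R}) : S :=
  odflt ord_max
    [pick r : S | (cl / (cl + cu) <= \sum_(i : S | (i <= r)%N) b i)
                  && [forall r' : S, (r' < r)%N ==>
                        ~~ (cl / (cl + cu) <= \sum_(i : S | (i <= r')%N) b i)]].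

(* Full-observation value with k steps to go: V^FO_t = Vfo (T - t). *)
Fixpoint Vfo (cu cl beta : R) (P : 'M[R]_M.+1) (k : nat) (b : {ffun S -> R}) : R :=
  match k with
  | 0 => Cbar cu cl b (pim cu cl b)
  | k'.+1 => Cbar cu cl b (pim cu cl b)
       + beta * \sum_i b i * Vfo cu cl beta P k' (rowP P i)
  end.

End Tracking.

From Pilot Require Import Defs.
From mathcomp Require Import all_boot all_order all_algebra.
From mathcomp Require Import ring.
Set Implicit Arguments. Unset Strict Implicit. Unset Printing Implicit Defensive.
Import Order.TTheory GRing.Theory Num.Theory.
Local Open Scope ring_scope.

(* The genie's one-step cost
   [Cbar b (pim b)] is the minimum of [Cbar b]: the expected loss is discretely
   convex in the order quantity, its increments changing sign at the critical
   fractile. The continuations differ only on the censored branch, where the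
   partially observed controller restarts from [T_r[b] P]; there the genie's
   value dominates the [T_r[b]]-average of its values at the rows of [P],
   because [Cbar] and the genie's continuation are linear in the belief while
   the genie picks its order after seeing the row. *)

Lemma le_turning_point d (T : porderType d) (f : nat -> T) (p : nat) :
  (forall n, (n < p)%N -> (f n.+1 <= f n)%O) ->
  (forall n, (p <= n)%N -> (f n <= f n.+1)%O) ->
  forall n, (f p <= f n)%O.
Proof.
move=> down up n; case: (leqP p n) => [pn | /ltnW np].
- apply: (homo_leq_in (D := [pred m | (p <= m)%N]) (r := <=%O) le_refl
    (@le_trans _ T) _ _ (leqnn p) pn pn) => [i j pi _ k /andP[ik _] | i pi _].
  + exact: leq_trans pi (ltnW ik).
  + exact: up.
- apply: (homo_leq_in (D := [pred m | (m <= p)%N]) (r := fun x y => (y <= x)%O)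
    le_refl (fun _ _ _ xy yz => le_trans yz xy) _ _ np (leqnn p) np)
    => [i j _ jp k /andP[_ kj] | i _ ip].
  + exact: leq_trans (ltnW kj) jp.
  + exact: down.
Qed.

Lemma minS_ge (R : realFieldType) (M : nat) (f : 'I_M.+1 -> R) (x : R) :
  (forall r, x <= f r) -> x <= minS f.
Proof. by move=> le_xf; apply: le_bigmin. Qed.

Section Newsvendor.
Variables (R : realFieldType) (M : nat) (cu cl : R).
Notation S := 'I_M.+1.
Implicit Types b : {ffun S -> R}.

Definition loss (j r : nat) : R :=
  if (r <= j)%N then cl * (j%:R - r%:R) else cu * (r%:R - j%:R).

Definition expected_loss b (r : nat) : R :=
  \sum_j b j * loss j r.

Definition cdf b (n : nat) : R := \sum_(j : S | (j <= n)%N) b j.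

Lemma Cbar_expected_loss b (r : S) : Cbar cu cl b r = expected_loss b r.
Proof.
rewrite /Cbar /expected_loss [RHS](bigID (fun j : S => (r <= j)%N)) /=.
rewrite !big_distrr /=; congr (_ + _).
  by apply: eq_bigr => j rj; rewrite /loss rj mulrCA.
apply: eq_big => [j | j jr]; first by rewrite ltnNge.
by rewrite /loss leqNgt jr mulrCA.
Qed.

Lemma le_cdf b m n : (forall i, 0 <= b i) -> (m <= n)%N -> cdf b m <= cdf b n.
Proof.
move=> b0 mn; rewrite /cdf [leLHS]big_mkcond [leRHS]big_mkcond /=.
apply: ler_sum => j _; case: ifP => [jm | _]; first by rewrite (leq_trans jm mn).
by case: ifP.
Qed.

Lemma cdf_max b : \sum_j b j = 1 -> cdf b M = 1.
Proof. by move=> <-; apply: eq_bigl => j; rewrite -ltnS ltn_ord. Qed.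

(* Raising the order by one unit costs [cu] on the mass below and saves [cl]
   on the mass above. *)
Lemma expected_loss_succ b n : \sum_j b j = 1 ->
  expected_loss b n.+1 - expected_loss b n = (cu + cl) * cdf b n - cl.
Proof.
move=> b1; rewrite /expected_loss -sumrB.
under eq_bigr => j _.
  rewrite -mulrBr (_ : loss j n.+1 - loss j n = if (j <= n)%N then cu else - cl).
    over.
  by rewrite /loss -natr1; case: ltngtP => [_|_|->]; ring.
rewrite (bigID (fun j : S => (j <= n)%N)) /=.
under eq_bigr => j -> do [].
under [X in _ + X]eq_bigr => j /negbTE -> do [].
rewrite -!mulr_suml /cdf.
have -> : \sum_(j : S | ~~ (j <= n)%N) b j = 1 - \sum_(j : S | (j <= n)%N) b j.
  by rewrite -b1 [X in _ = X - _](bigID (fun j : S => (j <= n)%N)) /=; ring.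
ring.
Qed.

Hypotheses (cu_gt0 : 0 < cu) (cl_gt0 : 0 < cl).

Definition critical_ratio : R := cl / (cl + cu).

Lemma critical_ratio_le1 : critical_ratio <= 1.
Proof. by rewrite ler_pdivrMr ?mul1r ?lerDl ?ltW // addr_gt0. Qed.

Lemma critical_ratio_le c : (critical_ratio <= c) = (0 <= (cu + cl) * c - cl).
Proof. by rewrite subr_ge0 ler_pdivrMr ?addr_gt0 // mulrC addrC. Qed.

Lemma pim_spec b : prob_vec b ->
  critical_ratio <= cdf b (pim cu cl b) /\
  forall r : S, (r < pim cu cl b)%N -> cdf b r < critical_ratio.
Proof.
move=> [b0 b1]; rewrite /pim; case: pickP => [r /andP[rP /forallP rmin] | none] /=.
  by split=> // r' r'r; move: (rmin r') => /implyP /(_ r'r); rewrite ltNge.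
exfalso; have ex_r : exists n, (n <= M)%N && (critical_ratio <= cdf b n).
  by exists M; rewrite leqnn cdf_max // critical_ratio_le1.
case: (ex_minnP ex_r) => m /andP[mM mP] mmin.
move: (none (Ordinal (mM : (m < M.+1)%N))); rewrite /= [X in X && _]mP /=.
move/negbT/negP; apply; apply/forallP => r'; apply/implyP => r'm; apply/negP => r'P.
by have := mmin r'; rewrite -ltnS ltn_ord r'P => /(_ isT); rewrite leqNgt r'm.
Qed.

Lemma Cbar_pim_le b (r : S) : prob_vec b -> Cbar cu cl b (pim cu cl b) <= Cbar cu cl b r.
Proof.
move=> pb; have [b0 b1] := pb; have [pimP pim_min] := pim_spec pb.
rewrite !Cbar_expected_loss; apply: le_turning_point => n n_pim.
- have nS : (n < M.+1)%N by apply: ltn_trans n_pim (ltn_ord _).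
  have := pim_min (Ordinal nS) n_pim; rewrite ltNge critical_ratio_le -ltNge.
  by rewrite -(expected_loss_succ _ b1) subr_lt0 => /ltW.
- rewrite -subr_ge0 expected_loss_succ // -critical_ratio_le.
  exact: le_trans pimP (le_cdf b0 n_pim).
Qed.

End Newsvendor.

Section BeliefDynamics.
Variables (R : realFieldType) (M : nat) (P : 'M[R]_M.+1).
Hypothesis P_stochastic : stochastic P.
Notation S := 'I_M.+1.
Implicit Types b w : {ffun S -> R}.

Lemma prob_vec_row i : prob_vec (Defs.rowP P i).
Proof.
case: P_stochastic => P0 P1; split => [j | ]; first by rewrite ffunE.
by rewrite -(P1 i); apply: eq_bigr => j _; rewrite ffunE.
Qed.

Lemma sum_propag w (h : S -> R) :
  \sum_j propag P w j * h j = \sum_i w i * \sum_j Defs.rowP P i j * h j.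
Proof.
under eq_bigr do rewrite ffunE mulr_suml.
rewrite exchange_big /=; apply: eq_bigr => i _; rewrite big_distrr /=.
by apply: eq_bigr => j _; rewrite ffunE mulrA.
Qed.

Lemma prob_vec_propag w : prob_vec w -> prob_vec (propag P w).
Proof.
case: P_stochastic => P0 P1 [w0 w1]; split => [j | ].
  by rewrite ffunE; apply: sumr_ge0 => i _; rewrite mulr_ge0.
under eq_bigr do rewrite ffunE.
rewrite exchange_big /= -w1; apply: eq_bigr => i _.
by rewrite -big_distrr /= P1 mulr1.
Qed.

Lemma prob_vec_Tr b (r : S) : prob_vec b -> 0 < tail_mass b r -> prob_vec (Tr b r).
Proof.
move=> [b0 b1] tail_gt0; split => [i | ].
  by rewrite ffunE; case: ifP => // _; rewrite divr_ge0 // ltW.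
under eq_bigr do rewrite ffunE.
by rewrite -big_mkcond /= -mulr_suml divff // gt_eqF.
Qed.

Lemma tail_mass_Tr_sum b (r : S) (h : S -> R) : tail_mass b r != 0 ->
  tail_mass b r * \sum_i Tr b r i * h i = \sum_(i : S | (r <= i)%N) b i * h i.
Proof.
move=> tail_neq0; rewrite big_distrr /= [RHS]big_mkcond /=.
apply: eq_bigr => i _; rewrite ffunE; case: ifP => _; last by rewrite !mul0r mulr0.
by rewrite mulrA mulrCA divff ?mulr1.
Qed.

Lemma tail_mass_eq0_sum b (r : S) (h : S -> R) : (forall i, 0 <= b i) ->
  tail_mass b r = 0 -> \sum_(i : S | (r <= i)%N) b i * h i = 0.
Proof.
move=> b0 tail_eq0; apply: big1 => i ri.
by rewrite (psumr_eq0P (fun i _ => b0 i) tail_eq0) // mul0r.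
Qed.

Variables (cu cl beta : R).
Hypotheses (cu_gt0 : 0 < cu) (cl_gt0 : 0 < cl) (beta_ge0 : 0 <= beta).

Lemma Cbar_propag w (r : S) :
  Cbar cu cl (propag P w) r = \sum_i w i * Cbar cu cl (Defs.rowP P i) r.
Proof.
rewrite Cbar_expected_loss /expected_loss sum_propag.
by apply: eq_bigr => i _; rewrite Cbar_expected_loss.
Qed.

Definition fo_continuation (k : nat) (j : S) : R :=
  if k is k'.+1 then Vfo cu cl beta P k' (Defs.rowP P j) else 0.

Lemma VfoE k b : Vfo cu cl beta P k b
  = Cbar cu cl b (pim cu cl b) + beta * \sum_j b j * fo_continuation k j.
Proof.
case: k => [|k] //=.
by rewrite big1 ?mulr0 ?addr0 // => j _; rewrite mulr0.
Qed.

Lemma Vfo_propag_ge k w : prob_vec w ->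
  \sum_i w i * Vfo cu cl beta P k (Defs.rowP P i) <= Vfo cu cl beta P k (propag P w).
Proof.
move=> pw; have [w0 _] := pw.
rewrite VfoE Cbar_propag (sum_propag w (fo_continuation k)) big_distrr -big_split /=.
apply: ler_sum => i _; rewrite VfoE mulrCA -mulrDr ler_wpM2l //.
by rewrite lerD2r Cbar_pim_le //; apply: prob_vec_row.
Qed.

Lemma Vfo_le_Vpo k b : prob_vec b -> Vfo cu cl beta P k b <= Vpo cu cl beta P k b.
Proof.
elim: k b => [|k IH] b pb /=; apply: minS_ge => r.
  exact: Cbar_pim_le.
have [b0 _] := pb.
rewrite lerD ?Cbar_pim_le // ler_wpM2l // (bigID (fun i : S => (r <= i)%N)) /=.
apply: lerD; last first.
  under [leRHS]eq_bigl => i do rewrite ltnNge.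
  by apply: ler_sum => i _; rewrite ler_wpM2l //; apply/IH/prob_vec_row.
case: ifPn => [tail_gt0 | ]; last first.
  rewrite -leNgt => tail_le0; rewrite tail_mass_eq0_sum //.
  by apply/eqP; rewrite eq_le tail_le0; apply: sumr_ge0.
rewrite -tail_mass_Tr_sum ?gt_eqF // ler_pM2l //.
have pTr := prob_vec_Tr pb tail_gt0.
exact: le_trans (Vfo_propag_ge k pTr) (IH _ (prob_vec_propag pTr)).
Qed.

End BeliefDynamics.

Theorem lemma2 (R : realFieldType) (M T : nat) (cu cl beta : R)
  (P : 'M[R]_M.+1) (b : {ffun 'I_M.+1 -> R}) (t : nat) :
  (1 <= T)%N -> 0 < cu -> 0 < cl -> 0 <= beta -> beta <= 1 ->
  stochastic P -> (1 <= t <= T)%N -> prob_vec b ->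
  Vfo cu cl beta P (T - t) b <= Vpo cu cl beta P (T - t) b.
Proof.
move=> _ cu_gt0 cl_gt0 beta_ge0 _ P_stochastic _ pb.
exact: Vfo_le_Vpo.
Qed.
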